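(* Let $G$ be a graph and $k\in\mathbb N$. Let $\tau$ be a regular, non-principal $\mathcal P'_k$-tangle of $S_k(G)$, and let $\sigma\subseteq\vec S_k(G)$ be a finite star with finite interior. Then $\sigma\not\subseteq\tau$.
   Context: Graphs may be infinite. A separation of $G$ is a set $\{A,B\}$ with $A,B\subseteq V(G)$, $A\cup B=V(G)$ and no edge of $G$ between $A\setminus B$ and $B\setminus A$; its order is $|A\cap B|$. $S_k(G)$ is the set of separations of order $<k$ and $\vec S_k(G)$ the set of their orientations $(A,B)$, $(B,A)$. Order: $(A,B)\le(C,D)$ iff $A\subseteq C$ and $B\supseteq D$. An orientation of $S_k(G)$ is a set containing exactly one orientation of each element; it is consistent if there are no distinct $\{A,B\},\{C,D\}\in S_k(G)$ with $(A,B)<(C,D)$, $(B,A)\in O$, $(C,D)\in O$; regular if it contains no separation of the form $(V(G),A)$; principal if for every set $X$ of fewer than $k$ vertices it contains $(V(G)\setminus V(K),V(K)\cup X)$ for some component $K$ of $G-X$ (non-principal otherwise). A star is a set $\sigma$ of oriented finite-order separations, not containing $(V(G),V(G))$, with $(A,B)\le(D,C)$ for distinct $(A,B),(C,D)\in\sigma$; its interior is $\mathrm{int}(\sigma)=\bigcap_{(A,B)\in\sigma}B$. $\mathcal P'_k$ is the set of all $\rho=\{(A,B),(B\cap C,A\cup D),(B\cap D,A\cup C)\}\subseteq\vec S_k(G)$ with $(A,B),(C,D)\in\vec S_k(G)$ and $|\mathrm{int}(\rho)|<k$. A $\mathcal P'_k$-tangle of $S_k(G)$ is a consistent orientation of $S_k(G)$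 containing no element of $\mathcal P'_k$ as a subset. *)

(* Graphs may be infinite: a graph is a vertex type V with an
   adjacency relation adj (assumed symmetric and irreflexive in the theorem). *)
From Stdlib Require Import List.
Import ListNotations.
Set Implicit Arguments.

Definition vset (V : Type) := V -> Prop.
Definition osep (V : Type) := (vset V * vset V)%type.

Section Defs.
Variable V : Type.
Variable adj : V -> V -> Prop.

Definition vsetT : vset V := fun _ => True.
Definition vsetI (A B : vset V) : vset V := fun x => A x /\ B x.
Definition vsetU (A B : vset V) : vset V := fun x => A x \/ B x.
Definition vsetC (A : vset V) : vset V := fun x => ~ A x.
Definition vsubset (A B : vset V) : Prop := forall x, A x -> B x.

Definition finite_set {T : Type} (S : T -> Prop) : Prop :=
  exists l : list T, forall x, S x <-> In x l.
Definition card_lt {T : Type} (S : T -> Prop) (k : nat) : Prop :=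
  exists l : list T, NoDup l /\ (forall x, S x <-> In x l) /\ length l < k.

Definition is_sep (A B : vset V) : Prop :=
  (forall v, A v \/ B v) /\
  (forall u v, A u -> ~ B u -> B v -> ~ A v -> ~ adj u v /\ ~ adj v u).

Definition vSk (k : nat) (s : osep V) : Prop :=
  is_sep (fst s) (snd s) /\ card_lt (vsetI (fst s) (snd s)) k.

Definition fin_osep (s : osep V) : Prop :=
  is_sep (fst s) (snd s) /\ finite_set (vsetI (fst s) (snd s)).

Definition sep_le (s t : osep V) : Prop := vsubset (fst s) (fst t) /\ vsubset (snd t) (snd s).
Definition sep_lt (s t : osep V) : Prop := sep_le s t /\ s <> t.
Definition inv (s : osep V) : osep V := ((snd s), (fst s)).

(* the unoriented separations {A,B} and {C,D} are distinct *)
Definition distinct_usep (s t : osep V) : Prop := s <> t /\ s <> inv t.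

Definition is_orientation (k : nat) (O : osep V -> Prop) : Prop :=
  (forall s, O s -> vSk k s) /\
  (forall s, vSk k s -> (O s \/ O (inv s)) /\ (O s -> O (inv s) -> s = inv s)).

Definition consistent (k : nat) (O : osep V -> Prop) : Prop :=
  ~ exists s t, vSk k s /\ vSk k t /\ distinct_usep s t /\
      sep_lt s t /\ O (inv s) /\ O t.

Definition regular (O : osep V -> Prop) : Prop :=
  forall A, ~ O (vsetT, A).

Inductive reach (X : vset V) (x : V) : V -> Prop :=
| reach_refl : ~ X x -> reach X x x
| reach_step : forall y z, reach X x y -> adj y z -> ~ X z -> reach X x z.

Definition component (X K : vset V) : Prop :=
  exists x, ~ X x /\ forall y, K y <-> reach X x y.

Definition principal (k : nat) (O : osep V -> Prop) : Prop :=
  forall X : vset V, card_lt X k ->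
    exists K, component X K /\ O (vsetC K, vsetU K X).

Definition star (sigma : osep V -> Prop) : Prop :=
  (forall s, sigma s -> fin_osep s) /\
  ~ sigma (vsetT, vsetT) /\
  (forall s t, sigma s -> sigma t -> s <> t -> sep_le s (inv t)).

Definition interior (sigma : osep V -> Prop) : vset V :=
  fun x => forall s, sigma s -> (snd s) x.

(* O contains no element of P'_k as a subset *)
Definition avoids_P'k (k : nat) (O : osep V -> Prop) : Prop :=
  forall A B C D : vset V,
    vSk k (A, B) -> vSk k (C, D) ->
    vSk k (vsetI B C, vsetU A D) -> vSk k (vsetI B D, vsetU A C) ->
    card_lt (vsetI B (vsetI (vsetU A D) (vsetU A C))) k ->
    ~ (O (A, B) /\ O (vsetI B C, vsetU A D) /\ O (vsetI B D, vsetU A C)).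

Definition P'k_tangle (k : nat) (O : osep V -> Prop) : Prop :=
  is_orientation k O /\ consistent k O /\ avoids_P'k k O.
End Defs.

(** Non-principality of [tau] yields a set [X] of fewer than [k] vertices
    such that [tau] contains [(K ∪ X, V ∖ K)] for every component [K] of
    [G - X].  Since [tau] is consistent and contains no element of [P'_k], it
    contains the join [(A ∪ C, B ∩ D)] of any [(A, B)] and [(C, D)] in [tau]
    whose separators [A ∩ B] and [B ∩ C ∩ D] lie in [X].  Joining [(X, V)]
    first with the separations of the finitely many components meeting the
    interior of [sigma], and then with the elements of [sigma], keeps the
    separator inside [X]: a vertex of [B ∩ C ∩ D] outside [X] lies in the
    interior of the star, and hence was already removed from [B].  The final
    join has small side [V] because every vertex outside the interior lies in
    the small side of some element of [sigma]; this contradicts regularity. *)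
From Stdlib Require Import List Lia Classical ClassicalEpsilon.
From Stdlib Require Import FunctionalExtensionality PropExtensionality.

Set Implicit Arguments.

Lemma vset_ext (V : Type) (A B : vset V) : (forall v, A v <-> B v) -> A = B.
Proof.
  intro H; apply functional_extensionality; intro v.
  apply propositional_extensionality, H.
Qed.

Lemma card_lt_subset {T : Type} {S X : T -> Prop} {n : nat} :
  card_lt X n -> (forall x, S x -> X x) -> card_lt S n.
Proof.
  intros [l [Hnd [HX Hlen]]] HSX.
  set (p := fun x => if excluded_middle_informative (S x) then true else false).
  exists (filter p l); split; [|split].
  - now apply NoDup_filter.
  - intro x; rewrite filter_In, <- HX; unfold p.
    destruct (excluded_middle_informative (S x)); split; auto.
    intros [_ Hf]; discriminate Hf.
  - pose proof (filter_length_le p l); lia.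
Qed.

Definition separator (V : Type) (s : osep V) : vset V := vsetI (fst s) (snd s).

Definition join (V : Type) (s t : osep V) : osep V :=
  (vsetU (fst s) (fst t), vsetI (snd s) (snd t)).

Definition join_list (V : Type) (s0 : osep V) (l : list (osep V)) : osep V :=
  fold_right (fun s acc => join acc s) s0 l.

Ltac vset_unfold :=
  unfold separator, inv, vsubset, vsetI, vsetU, vsetC, vsetT in *; simpl in *.

Lemma separator_join (V : Type) (s t : osep V) :
  vsubset (separator (join s t))
          (vsetU (separator s) (vsetI (snd s) (separator t))).
Proof. unfold join; vset_unfold; tauto. Qed.

Section Separations.
Variables (V : Type) (adj : V -> V -> Prop).

Lemma is_sep_sym A B : is_sep adj A B -> is_sep adj B A.
Proof.
  intros [Hcov Hedge]; split.
  - intro v; destruct (Hcov v); tauto.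
  - intros u v Bu nAu Av nBv; destruct (Hedge v u); tauto.
Qed.

Lemma is_sep_corner A B C D :
  is_sep adj A B -> is_sep adj C D -> is_sep adj (vsetI B C) (vsetU A D).
Proof.
  intros [HAB eAB] [HCD eCD]; split; vset_unfold.
  - intro v; destruct (HAB v), (HCD v); tauto.
  - intros u v [Bu Cu] Hu Hv Hv'.
    specialize (eAB v u); specialize (eCD u v).
    destruct (HAB v), (HCD v); tauto.
Qed.

Lemma vSk_inv k s : vSk adj k s -> vSk adj k (inv s).
Proof.
  intros [Hsep Hcard]; split.
  - now apply is_sep_sym.
  - apply (card_lt_subset Hcard); vset_unfold; tauto.
Qed.

Lemma vSk_small_separator k X s :
  card_lt X k -> is_sep adj (fst s) (snd s) -> vsubset (separator s) X ->
  vSk adj k s.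
Proof.
  intros HX Hsep HsX; split; [exact Hsep | exact (card_lt_subset HX HsX)].
Qed.

Lemma join_list_fst (s0 : osep V) l v :
  fst (join_list s0 l) v <-> fst s0 v \/ exists s, In s l /\ fst s v.
Proof.
  induction l as [|t l IH]; simpl; vset_unfold; rewrite ?IH;
    firstorder congruence.
Qed.

Lemma join_list_snd (s0 : osep V) l v :
  snd (join_list s0 l) v <-> snd s0 v /\ forall s, In s l -> snd s v.
Proof.
  induction l as [|t l IH]; simpl; vset_unfold; rewrite ?IH;
    firstorder congruence.
Qed.

Lemma star_separator_interior (sigma : osep V -> Prop) s v :
  star adj sigma -> sigma s -> separator s v -> interior sigma v.
Proof.
  intros [_ [_ Hle]] Hs [Hfst Hsnd] t Ht.
  destruct (classic (s = t)) as [<-|Hst]; [exact Hsnd|].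
  exact (proj1 (Hle s t Hs Ht Hst) v Hfst).
Qed.

Lemma outside_interior_fst (sigma : osep V -> Prop) v :
  (forall s, sigma s -> is_sep adj (fst s) (snd s)) -> ~ interior sigma v ->
  exists s, sigma s /\ fst s v.
Proof.
  intros Hsep Hv; apply NNPP; intro Hno; apply Hv; intros s Hs.
  destruct (proj1 (Hsep s Hs) v); [exfalso; eauto | assumption].
Qed.

End Separations.

Section Components.
Variables (V : Type) (adj : V -> V -> Prop) (X : vset V).
Hypothesis adj_sym : forall u v, adj u v -> adj v u.

Definition component_side (z : V) : osep V :=
  (vsetU (reach adj X z) X, vsetC (reach adj X z)).

Lemma reach_source x y : reach adj X x y -> ~ X x.
Proof. induction 1; assumption. Qed.

Lemma is_sep_component_side z :
  is_sep adj (fst (component_side z)) (snd (component_side z)).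
Proof.
  unfold component_side; apply is_sep_sym; split; vset_unfold.
  - intro v; destruct (classic (reach adj X z v)); tauto.
  - intros u v nKu nKXu _ nnKv.
    assert (Kv : reach adj X z v) by (apply NNPP, nnKv).
    assert (nXu : ~ X u) by tauto.
    split; intro Huv; apply nKu; apply reach_step with v; auto.
Qed.

Definition components_join (lz : list V) : osep V :=
  join_list (X, @vsetT V) (map component_side lz).

Lemma fst_star_join_full (sigma : osep V -> Prop) lz ls :
  (forall s, sigma s -> is_sep adj (fst s) (snd s)) ->
  (forall v, interior sigma v -> In v lz) -> (forall s, sigma s -> In s ls) ->
  fst (join_list (components_join lz) ls) = @vsetT V.
Proof.
  intros Hsep Hlz Hls; apply vset_ext; intro v; split; [easy|]; intros _.
  apply join_list_fst; destruct (classic (interior sigma v)) as [Hv|Hv].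
  - left; apply join_list_fst; destruct (classic (X v)); [now left|].
    right; exists (component_side v); split.
    + now apply in_map, Hlz.
    + left; now constructor.
  - destruct (outside_interior_fst Hsep Hv) as [t [Ht Htv]].
    right; exists t; split; [apply Hls|]; assumption.
Qed.

End Components.

Lemma not_principal_witness (V : Type) (adj : V -> V -> Prop) k
  (O : osep V -> Prop) :
  ~ principal adj k O ->
  exists X, card_lt X k /\
    forall K, component adj X K -> ~ O (vsetC K, vsetU K X).
Proof.
  intro Hnp; apply NNPP; intro Hno; apply Hnp; intros X HX.
  apply NNPP; intro HnoK; apply Hno.
  exists X; split; [exact HX|]; intros K HK HO; eauto.
Qed.

Section Tangle.
Variables (V : Type) (adj : V -> V -> Prop) (k : nat) (tau : osep V -> Prop).
Hypothesis tau_tangle : P'k_tangle adj k tau.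
Hypothesis tau_regular : regular tau.

Lemma tangle_vSk s : tau s -> vSk adj k s.
Proof. apply (proj1 (proj1 tau_tangle)). Qed.

Lemma tangle_orient s : vSk adj k s -> ~ tau (inv s) -> tau s.
Proof.
  intros Hs Hinv; destruct (proj1 (proj2 (proj1 tau_tangle) s Hs)); tauto.
Qed.

Lemma tangle_snd_not_subset s : tau s -> ~ vsubset (snd s) (fst s).
Proof.
  destruct s as [C D]; simpl; intros Hs HDC.
  assert (HC : C = @vsetT V).
  { apply vset_ext; intro v; split; [easy|]; intros _.
    destruct (proj1 (proj1 (tangle_vSk Hs)) v); auto. }
  subst C; exact (tau_regular Hs).
Qed.

Lemma tangle_antisym s : tau s -> ~ tau (inv s).
Proof.
  intros Hs Hinv.
  assert (Hs_inv : s = inv s)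
    by exact (proj2 (proj2 (proj1 tau_tangle) _ (tangle_vSk Hs)) Hs Hinv).
  apply (tangle_snd_not_subset Hs); destruct s as [A B].
  injection Hs_inv as -> _; intros v Hv; exact Hv.
Qed.

Lemma tangle_down_closed s t : tau t -> sep_le s t -> vSk adj k s -> tau s.
Proof.
  intros Ht Hle Hs.
  destruct (classic (s = t)) as [->|Hst]; [exact Ht|].
  apply tangle_orient; [exact Hs|]; intro Hinv.
  assert (Hs_not_inv : s <> inv t).
  { intro Hsinv; subst s; exact (tangle_snd_not_subset Ht (proj1 Hle)). }
  apply (proj1 (proj2 tau_tangle)); exists s, t.
  split; [exact Hs|]; split; [exact (tangle_vSk Ht)|].
  split; [split; assumption|]; split; [split; assumption|].
  split; assumption.
Qed.

Lemma tangle_small_side X : card_lt X k -> tau (X, @vsetT V).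
Proof.
  intro HX; apply tangle_orient; [|apply tau_regular].
  apply (vSk_small_separator HX); [split|]; vset_unfold; tauto.
Qed.

(* If [tau] missed the join, it would contain [(B ∩ D, A ∪ C)], hence by
   [P'_k]-avoidance [(A ∪ D, B ∩ C)], hence by consistency [(D, C)]. *)
Lemma tangle_join X s t :
  card_lt X k -> tau s -> tau t ->
  vsubset (separator s) X -> vsubset (vsetI (snd s) (separator t)) X ->
  tau (join s t).
Proof.
  destruct s as [A B], t as [C D]; unfold join, separator; simpl.
  intros HX Hs Ht HsX HtX.
  destruct (tangle_vSk Hs) as [HAB _], (tangle_vSk Ht) as [HCD _].
  assert (HBC : vSk adj k (vsetI B C, vsetU A D)).
  { apply (vSk_small_separator HX); [now apply is_sep_corner|].
    intros v Hv; vset_unfold; firstorder. }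
  assert (HBD : vSk adj k (vsetI B D, vsetU A C)).
  { apply (vSk_small_separator HX);
      [apply is_sep_corner; [|apply is_sep_sym]; assumption|].
    intros v Hv; vset_unfold; firstorder. }
  apply tangle_orient; [now apply (vSk_inv HBD)|]; simpl; intro HinBD.
  assert (HoutBC : ~ tau (vsetI B C, vsetU A D)).
  { intro HinBC.
    refine (proj2 (proj2 tau_tangle) A B C D (tangle_vSk Hs) (tangle_vSk Ht)
              HBC HBD _ (conj Hs (conj HinBC HinBD))).
    apply (card_lt_subset HX); intros v Hv; vset_unfold; firstorder. }
  assert (HDC : tau (D, C)).
  { apply (tangle_down_closed (t := (vsetU A D, vsetI B C))).
    - exact (tangle_orient (s := (vsetU A D, vsetI B C)) (vSk_inv HBC) HoutBC).
    - split; vset_unfold; tauto.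
    - exact (vSk_inv (tangle_vSk Ht)). }
  exact (tangle_antisym Ht HDC).
Qed.

Lemma tangle_join_list X s0 l :
  card_lt X k -> tau s0 -> vsubset (separator s0) X ->
  (forall s, In s l -> tau s /\ vsubset (vsetI (snd s0) (separator s)) X) ->
  tau (join_list s0 l) /\ vsubset (separator (join_list s0 l)) X.
Proof.
  intros HX Hs0 Hs0X; induction l as [|t l IH]; intro Hl; [easy|].
  destruct IH as [Hacc HaccX]; [intros s Hs; apply Hl; now right|].
  destruct (Hl t (or_introl eq_refl)) as [Ht HtX].
  assert (HsndX : vsubset (vsetI (snd (join_list s0 l)) (separator t)) X).
  { intros v [Hv Htv]; apply HtX; split; [|exact Htv].
    exact (proj1 (proj1 (join_list_snd s0 l v) Hv)). }
  split; [exact (tangle_join HX Hacc Ht HaccX HsndX)|].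
  intros v Hv; destruct (separator_join Hv); auto.
Qed.

Section NonPrincipal.
Variable X : vset V.
Hypothesis X_small : card_lt X k.
Hypothesis X_witness :
  forall K, component adj X K -> ~ tau (vsetC K, vsetU K X).
Hypothesis adj_sym : forall u v, adj u v -> adj v u.

Lemma tangle_component_side z : tau (component_side adj X z).
Proof.
  apply tangle_orient.
  - apply (vSk_small_separator X_small); [now apply is_sep_component_side|].
    unfold component_side; vset_unfold; tauto.
  - unfold component_side; simpl; destruct (classic (X z)) as [Xz|nXz].
    + replace (vsetC (reach adj X z)) with (@vsetT V); [apply tau_regular|].
      apply vset_ext; intro v; split; [|easy]; intros _ Hv.
      exact (reach_source Hv Xz).
    + apply X_witness; exists z; split; [exact nXz | easy].
Qed.

Lemma tangle_components_join lz :
  tau (components_join adj X lz) /\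
  vsubset (separator (components_join adj X lz)) X.
Proof.
  apply tangle_join_list; [exact X_small | now apply tangle_small_side | |].
  - unfold separator; vset_unfold; tauto.
  - intros s Hs; apply in_map_iff in Hs as [z [<- _]].
    split; [apply tangle_component_side|].
    unfold component_side; vset_unfold; tauto.
Qed.

Variable sigma : osep V -> Prop.
Hypothesis sigma_star : star adj sigma.
Hypothesis sigma_tau : forall s, sigma s -> tau s.
Variable lz : list V.
Hypothesis lz_interior : forall v, interior sigma v -> In v lz.

Lemma tangle_star_join ls :
  (forall s, In s ls -> sigma s) ->
  tau (join_list (components_join adj X lz) ls).
Proof.
  intro Hls; destruct (tangle_components_join lz) as [Hc HcX].
  apply (tangle_join_list ls X_small Hc HcX); intros s Hs.
  split; [now apply sigma_tau, Hls|].
  intros v [Hv Hsv]; apply NNPP; intro nXv.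
  assert (Hz : In v lz)
    by exact (lz_interior (star_separator_interior sigma_star (Hls s Hs) Hsv)).
  apply (join_list_snd _ _ v) in Hv as [_ Hv].
  apply (Hv (component_side adj X v)); [now apply in_map|].
  now constructor.
Qed.

End NonPrincipal.
End Tangle.

Theorem lemma2p4 (V : Type) (adj : V -> V -> Prop)
  (adj_sym : forall u v, adj u v -> adj v u)
  (adj_irr : forall v, ~ adj v v)
  (k : nat) (tau : osep V -> Prop) (sigma : osep V -> Prop) :
  P'k_tangle adj k tau -> regular tau -> ~ principal adj k tau ->
  (forall s, sigma s -> vSk adj k s) ->
  star adj sigma -> finite_set sigma -> finite_set (interior sigma) ->
  ~ (forall s, sigma s -> tau s).
Proof.
  intros Htang Hreg Hnp Hsig Hstar [ls Hls] [lz Hlz] Hsub.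
  destruct (not_principal_witness Hnp) as [X [HX HXK]].
  assert (Hsep : forall t, sigma t -> is_sep adj (fst t) (snd t))
    by (intros t Ht; apply Hsig, Ht).
  apply (Hreg (snd (join_list (components_join adj X lz) ls))).
  rewrite <- (fst_star_join_full X lz ls Hsep (fun v => proj1 (Hlz v))
                (fun t => proj1 (Hls t))), <- surjective_pairing.
  exact (tangle_star_join Htang Hreg HX HXK adj_sym Hstar Hsub lz
           (fun v => proj1 (Hlz v)) ls (fun t => proj2 (Hls t))).
Qed.
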